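(* Let $d$ be a positive integer and let $A\in\mathbb{R}^{[3]\times[n]}$ be a matrix that does not have an elimination ordering. Then there exists $b\in\mathbb{R}^{[3]}$ such that the solution graph $G(R(A,b))$ is not connected.
   Context: Fix a positive integer $d$ and let $D=\{0,1,\dots,d\}$; $[n]=\{1,\dots,n\}$. For $A\in\mathbb{R}^{[m]\times[n]}$ and $b\in\mathbb{R}^{[m]}$, $R(A,b)=\{x\in D^{[n]} : Ax\ge b\}$. For $R\subseteq D^{[n]}$, the solution graph $G(R)$ is the undirected graph with vertex set $R$ in which $x,y$ are adjacent iff they differ in exactly one coordinate. A matrix $A=(a_{ij})$ with column index set $J$ can be eliminated at column $j\in J$ if (i) for every row $i$ with $a_{ij}>0$ we have $a_{ij'}=0$ for all $j'\in J\setminus\{j\}$, or (ii) for every row $i$ with $a_{ij}<0$ we have $a_{ij'}=0$ for all $j'\in J\setminus\{j\}$. For $J'\subseteq[n]$, $\mathrm{elm}(A,J')$ is the submatrix of $A$ obtained by deleting the columns indexed by $J'$. A sequence $(j_1,\dots,j_n)$ of the elements of $[n]$ is an elimination ordering (EO) of $A$ if for every $t\in[n]$ the matrix $\mathrm{elm}(A,\{j_1,\dots,j_{t-1}\})$ can be eliminated at column $j_t$. *)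

From mathcomp Require Import all_boot all_order all_algebra.
From mathcomp Require Import reals.
Set Implicit Arguments. Unset Strict Implicit. Unset Printing Implicit Defensive.
Import Order.TTheory GRing.Theory Num.Theory.
Local Open Scope ring_scope.

(* Points of D^[n] with D = {0,...,d}: finite functions 'I_n -> 'I_d.+1. *)
Definition point (d n : nat) := {ffun 'I_n -> 'I_d.+1}.

Definition solset (R : realType) (d m n : nat) (A : 'M[R]_(m, n)) (b : 'cV[R]_m)
  : {set point d n} :=
  [set x : point d n | [forall i : 'I_m,
      b i 0 <= \sum_(j < n) A i j * ((x j : nat)%:R)]].

Definition adjacent (d n : nat) (x y : point d n) : bool :=
  #|[set j : 'I_n | x j != y j]| == 1%N.

Definition sol_rel (d n : nat) (S : {set point d n}) : rel (point d n) :=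
  fun x y => [&& x \in S, y \in S & adjacent x y].

Definition graph_connected (d n : nat) (S : {set point d n}) : Prop :=
  forall x y, x \in S -> y \in S -> connect (sol_rel S) x y.

(* A restricted to the columns J (i.e. elm(A, [n] \ J)) can be eliminated at
   column j \in J. *)
Definition can_elim (R : realType) (m n : nat) (A : 'M[R]_(m, n))
  (J : {set 'I_n}) (j : 'I_n) : Prop :=
  j \in J /\
  ((forall i : 'I_m, 0 < A i j -> forall j' : 'I_n, j' \in J -> j' != j -> A i j' = 0)
   \/
   (forall i : 'I_m, A i j < 0 -> forall j' : 'I_n, j' \in J -> j' != j -> A i j' = 0)).

Definition elim_ordering (R : realType) (m n : nat) (A : 'M[R]_(m, n))
  (s : seq 'I_n) : Prop :=
  perm_eq s (enum 'I_n) /\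
  forall (s1 s2 : seq 'I_n) (j : 'I_n), s = s1 ++ j :: s2 ->
    can_elim A (~: [set x in s1]) j.

Definition has_EO (R : realType) (m n : nat) (A : 'M[R]_(m, n)) : Prop :=
  exists s : seq 'I_n, elim_ordering A s.

(* Induction on the number of nonzero columns.  If a nonzero column c can be
   eliminated, say every row with a positive entry in c involves c alone, then
   fixing x_c = 0 (in the negative case x_c = d, shifting b by d times column c)
   embeds the instance of the matrix with column c zeroed out into the instance
   of A as a retract, so a disconnected instance of the smaller matrix, which
   still has no elimination ordering, lifts to A.

   Otherwise disconnection comes from a direction w in {-1,0,1}^n: take x at a
   corner of D^n, y = x + w and b = min(Ax, Ay).  If every nonzero coordinate of
   x is pinned at an end of D by a row that would drop below b were it to move
   inwards, then no point agreeing with x on the nonzero columns has a feasible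
   neighbour changing one of them, and y is unreachable.  A moving column is
   pinned by a row whose only other moving column contributes with the opposite
   sign; the other columns are pinned because, after replacing w by -w, at most
   one entry of Aw is negative while each of them has two nonzero entries.

   With three rows, when no nonzero column can be eliminated, either two columns
   have opposite signs on the same two rows, or every nonzero column has exactly
   two nonzero entries of opposite signs and three of them form a triangle on
   the three pairs of rows; both configurations yield such a w. *)

From mathcomp Require Import all_boot all_order all_algebra.
From mathcomp Require Import reals.
From mathcomp Require Import ring lra zify.
From Stdlib Require Import Classical_Prop.
Set Implicit Arguments. Unset Strict Implicit. Unset Printing Implicit Defensive.
Import Order.TTheory GRing.Theory Num.Theory.
Local Open Scope ring_scope.

Lemma cat_eq_cat_cons (T : Type) (s1 s2 t1 t2 : seq T) (x : T) :
  s1 ++ s2 = t1 ++ x :: t2 ->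
  (exists2 u, t1 = s1 ++ u & s2 = u ++ x :: t2) \/
  (exists2 u, s1 = t1 ++ x :: u & t2 = u ++ s2).
Proof.
elim: s1 t1 => [|y s1 IH] t1 /=; first by move=> ->; left; exists t1.
case: t1 => [|z t1] /= [-> eq_s]; first by right; exists s1.
by case: (IH _ eq_s) => -[u -> ->]; [left|right]; exists u.
Qed.

Lemma sgr_mul_self_gt0 (R : realDomainType) (a : R) : a != 0 -> 0 < Num.sg a * a.
Proof. by rewrite -normrEsg normr_gt0. Qed.

Lemma mulr_lt0_neq0l (R : realDomainType) (a b : R) : a * b < 0 -> a != 0.
Proof. by rewrite mulr_lt0 => /and3P []. Qed.

Lemma sgr_mul_lt0 (R : realDomainType) (a b : R) : a * b < 0 -> Num.sg a * b < 0.
Proof.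
case: (ltrgtP a 0) => [a_lt0|a_gt0|->]; last by rewrite mul0r ltxx.
- by rewrite ltr0_sg // mulN1r oppr_lt0 nmulr_rlt0.
- by rewrite gtr0_sg // mul1r pmulr_rlt0.
Qed.

Lemma exists_mul_lt0 (R : realDomainType) (I : Type) (f : I -> R) (a : R) : a != 0 ->
  (exists i, 0 < f i) -> (exists i, f i < 0) -> exists i, a * f i < 0.
Proof.
move=> a_neq0 [ip f_ip] [im f_im]; case: (ltrgtP a 0) => [a_lt0|a_gt0|a0].
- by exists ip; rewrite nmulr_rlt0.
- by exists im; rewrite pmulr_rlt0.
- by rewrite a0 eqxx in a_neq0.
Qed.

Lemma mul_lt0_of_support (R : realDomainType) (I : Type) (f : I -> R) (p q : I) :
  (forall i, f i != 0 -> i = p \/ i = q) ->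
  (exists i, 0 < f i) -> (exists i, f i < 0) -> f p * f q < 0.
Proof.
move=> supp [ip f_ip] [im f_im].
by case: (supp ip (lt0r_neq0 f_ip)) => e_ip; case: (supp im (ltr0_neq0 f_im)) => e_im; subst; nra.
Qed.

Section Disconnection.
Variables (R : realType) (d m n : nat).
Implicit Types (A : 'M[R]_(m, n)) (u w : 'I_n -> R) (v : 'I_m -> R) (x y z : point d n).

Definition coords z (j : 'I_n) : R := (z j : nat)%:R.

Definition mxv A u (i : 'I_m) : R := \sum_(j < n) A i j * u j.

Definition nzcol A (j : 'I_n) := [exists i, A i j != 0].

Definition disconnectable A := exists b : 'cV[R]_m, ~ graph_connected (solset d A b).

Lemma in_solset A b z : (z \in solset d A b) = [forall i, b i 0 <= mxv A (coords z) i].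
Proof. by rewrite inE. Qed.

Lemma mxvD A u u' i : mxv A (fun j => u j + u' j) i = mxv A u i + mxv A u' i.
Proof. by rewrite /mxv -big_split; apply: eq_bigr => j _; rewrite mulrDr. Qed.

Lemma mxvN A w i : mxv A (fun j => - w j) i = - mxv A w i.
Proof. by rewrite /mxv -sumrN; apply: eq_bigr => j _; rewrite mulrN. Qed.

Lemma eq_mxv_nzcol A u u' i :
  (forall j, nzcol A j -> u j = u' j) -> mxv A u i = mxv A u' i.
Proof.
move=> eq_u; apply: eq_bigr => j _; case: (boolP (nzcol A j)) => [/eq_u -> //|].
by move/existsPn/(_ i); rewrite negbK => /eqP ->; rewrite !mul0r.
Qed.

Lemma mxv_agree_off A u u' c i : (forall j, j != c -> u j = u' j) ->
  mxv A u' i = mxv A u i + A i c * (u' c - u c).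
Proof.
move=> eq_u; rewrite /mxv (bigD1 c) //= [in RHS](bigD1 c) //= mulrBr.
rewrite (eq_bigr (fun j => A i j * u j)) => [|j /eq_u -> //]; lra.
Qed.

Lemma adjacentP x y :
  adjacent x y -> exists2 c, x c != y c & forall j, j != c -> x j = y j.
Proof.
move/cards1P => [c diff_c].
have diffE j : (x j != y j) = (j == c) by rewrite -in_set1 -diff_c inE.
exists c; first by rewrite diffE.
by move=> j; rewrite -diffE => /negPn/eqP.
Qed.

Lemma sol_rel_sym (S : {set point d n}) : symmetric (sol_rel S).
Proof.
move=> x y; rewrite /sol_rel /adjacent andbCA; congr [&& _, _ & _ == 1%N].
by apply: eq_card => j; rewrite !inE eq_sym.
Qed.

(* Row [i] makes moving a coordinate [c] of a point [x] in direction [s]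
   infeasible for the right-hand side [min (A x) (A x + v)]. *)
Definition blocked A v (s : R) c := [exists i, (s * A i c < 0) && (s * A i c < v i)].

Lemma blocked_nzcol A v s c : blocked A v s c -> nzcol A c.
Proof.
case/existsP => i /andP [neg _]; apply/existsP; exists i.
by apply: contraTneq neg => ->; rewrite mulr0 ltxx.
Qed.

Lemma blocked_of_nonneg A v c i : A i c != 0 -> 0 <= v i ->
  blocked A v 1 c || blocked A v (-1) c.
Proof.
move=> nz_Aic v_ge0; case: (ltrgtP (A i c) 0) => [Aic_lt0|Aic_gt0|Aic0].
- by apply/orP; left; apply/existsP; exists i; rewrite mul1r Aic_lt0 (lt_le_trans Aic_lt0).
- apply/orP; right; apply/existsP; exists i; rewrite mulN1r oppr_lt0 Aic_gt0 /=.
  by rewrite (lt_le_trans _ v_ge0) // oppr_lt0.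
- by rewrite Aic0 eqxx in nz_Aic.
Qed.

Section Pinned.
Variables (A : 'M[R]_(m, n)) (x y : point d n) (w : 'I_n -> R).
Hypothesis coords_y : forall j, coords y j = coords x j + w j.
Hypothesis pinned : forall j, nzcol A j ->
  ((x j : nat) = 0%N /\ blocked A (mxv A w) 1 j) \/
  ((x j : nat) = d /\ blocked A (mxv A w) (-1) j).

Lemma pinned_move j (k : 'I_d.+1) : nzcol A j -> k != x j ->
  exists i, A i j * ((k : nat)%:R - coords x j) < Num.min 0 (mxv A w i).
Proof.
move=> nz_j k_x; have k_le : (k <= d)%N by rewrite -ltnS.
have k_ne : (k : nat) != x j := k_x.
case: (pinned nz_j) => -[x_j /existsP [i /andP [neg lt_v]]]; exists i;
  rewrite /coords x_j lt_min; move: neg lt_v; rewrite ?mul1r ?mulN1r => neg lt_v.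
- have : 1 <= (k : nat)%:R :> R by rewrite ler1n; lia.
  by move=> k_ge1; apply/andP; split; nra.
- have : (k : nat)%:R + 1 <= d%:R :> R by rewrite natr1 ler_nat; lia.
  by move=> k_le1; apply/andP; split; nra.
Qed.

Let b : 'cV[R]_m := \col_i Num.min (mxv A (coords x) i) (mxv A (coords y) i).
Let S := solset d A b.

Lemma pinned_step (a a' : point d n) : (forall j, nzcol A j -> a j = x j) ->
  sol_rel S a a' -> forall j, nzcol A j -> a' j = x j.
Proof.
move=> a_x /and3P [_ a'S /adjacentP [c diff_c agree]] j nz_j.
case: (eqVneq j c) => [j_c|]; last by move=> ?; rewrite -agree ?a_x.
subst j; exfalso; have [|i move_i] := pinned_move nz_j (k := a' c).
  by rewrite -a_x // eq_sym.
have mxv_a : mxv A (coords a) i = mxv A (coords x) i.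
  by apply: eq_mxv_nzcol => k /a_x; rewrite /coords => ->.
have mxv_a' : mxv A (coords a') i = mxv A (coords x) i + A i c * (coords a' c - coords a c).
  by rewrite -mxv_a; apply: mxv_agree_off => k /agree; rewrite /coords => ->.
have mxv_y : mxv A (coords y) i = mxv A (coords x) i + mxv A w i.
  by rewrite -mxvD; apply: eq_bigr => k _; rewrite coords_y.
move: a'S move_i; rewrite in_solset lt_min => /forallP /(_ i).
have a_c : coords a c = coords x c by rewrite /coords a_x.
rewrite /b mxE mxv_a' mxv_y a_c ge_min.
by case/orP => ? /andP [? ?]; lra.
Qed.

Lemma pinned_disconnectable : (exists2 j, nzcol A j & x j != y j) -> disconnectable A.
Proof.
case=> j nz_j xy_j; exists b => conn.
have xS : x \in S by rewrite in_solset; apply/forallP => i; rewrite mxE ge_min lexx.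
have yS : y \in S by rewrite in_solset; apply/forallP => i; rewrite mxE ge_min lexx orbT.
have frozen p (a : point d n) : (forall j, nzcol A j -> a j = x j) ->
    path (sol_rel S) a p -> forall j, nzcol A j -> last a p j = x j.
  elim: p a => [//|a' p IH] a a_x /= /andP [step path_p].
  exact: IH (pinned_step a_x step) path_p.
case/connectP: (conn x y xS yS) => p path_p y_last.
by move: xy_j; rewrite y_last frozen ?eqxx.
Qed.

End Pinned.

Lemma direction_disconnectable A w : (0 < d)%N ->
  (forall c, Num.sg (w c) = w c) -> (exists c, w c != 0) ->
  (forall c, w c != 0 -> blocked A (mxv A w) (w c) c) ->
  (forall c, nzcol A c -> w c = 0 -> blocked A (mxv A w) 1 c || blocked A (mxv A w) (-1) c) ->
  disconnectable A.
Proof.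
move=> d_gt0 sg_w [c0 wc0_neq0] blocked_w blocked_0.
(* Each coordinate of [x] sits at the end of [D] from which its blocked direction
   points inwards. *)
pose x : point d n := [ffun c => if 0 < w c then ord0 else if w c < 0 then ord_max
  else if blocked A (mxv A w) 1 c then ord0 else ord_max].
pose y : point d n := [ffun c => if 0 < w c then inord 1 else if w c < 0 then inord d.-1
  else x c].
have coords_y c : coords y c = coords x c + w c.
  rewrite /coords !ffunE; case: (ltrgtP (w c) 0) => [wc_lt0|wc_gt0|->]; last by rewrite addr0.
  - rewrite -sg_w ltr0_sg // inordK ?ltnS ?leq_pred //.
    by rewrite -subn1 natrB.
  - by rewrite -sg_w gtr0_sg // inordK ?add0r.
apply: (@pinned_disconnectable A x y w coords_y) => [c nz_c|].
  rewrite ffunE; case: (ltrgtP (w c) 0) => [wc_lt0|wc_gt0|wc0].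
  - by right; rewrite -(ltr0_sg wc_lt0) sg_w; split; last exact/blocked_w/ltr0_neq0.
  - by left; rewrite -(gtr0_sg wc_gt0) sg_w; split; last exact/blocked_w/lt0r_neq0.
  - case: ifP => [blocked_up|/negbT blocked_not_up]; [by left|right; split => //].
    by move: (blocked_0 c nz_c wc0); rewrite (negbTE blocked_not_up).
exists c0; first exact: blocked_nzcol (blocked_w c0 wc0_neq0).
apply: contra_neq wc0_neq0 => xy_c0.
by have := coords_y c0; rewrite /coords xy_c0; lra.
Qed.

Definition zcol A c : 'M[R]_(m, n) := \matrix_(i, j) if j == c then 0 else A i j.

Lemma mxv_zcol A c u i : mxv (zcol A c) u i = mxv A u i - A i c * u c.
Proof.
rewrite /mxv (bigD1 c) //= [in RHS](bigD1 c) //= mxE eqxx mul0r add0r addrAC subrr add0r.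
by apply: eq_bigr => j /negbTE j_c; rewrite mxE j_c.
Qed.

Definition upd c z (k : 'I_d.+1) : point d n := [ffun j => if j == c then k else z j].

Lemma connect_upd (S : {set point d n}) c z k :
  z \in S -> upd c z k \in S -> connect (sol_rel S) z (upd c z k).
Proof.
move=> zS uS; have [<-|z_upd] := eqVneq z (upd c z k); first exact: connect0.
apply: connect1; rewrite /sol_rel zS uS /=; apply/cards1P; exists c.
apply/setP => j; rewrite !inE ffunE; case: (eqVneq j c) => [->|_]; last by rewrite eqxx.
apply: contraNneq z_upd => z_c; apply/eqP/ffunP => i; rewrite ffunE.
by case: eqVneq => // ->.
Qed.

Lemma connected_retract (S S0 : {set point d n}) (f : point d n -> point d n) :
  S \subset S0 -> (forall z, z \in S0 -> f z \in S) ->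
  (forall z, z \in S0 -> connect (sol_rel S0) z (f z)) ->
  graph_connected S -> graph_connected S0.
Proof.
move=> sub_S fS z_fz conn x y xS0 yS0.
have sub_conn : subrel (connect (sol_rel S)) (connect (sol_rel S0)).
  apply: connect_sub => a a' /and3P [aS a'S adj].
  by apply: connect1; rewrite /sol_rel !(subsetP sub_S) ?adj.
apply: connect_trans (z_fz x xS0) _.
apply: connect_trans (sub_conn _ _ (conn _ _ (fS x xS0) (fS y yS0))) _.
by rewrite (sym_connect_sym (@sol_rel_sym S0)) z_fz.
Qed.

Lemma disconnected_of_zcol A c b0 (k : 'I_d.+1) :
  (forall i, (forall j, j != c -> A i j = 0) \/
             (forall k' : 'I_d.+1, A i c * ((k' : nat)%:R - (k : nat)%:R) <= 0)) ->
  ~ graph_connected (solset d (zcol A c) b0) ->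
  ~ graph_connected (solset d A (\col_i (b0 i 0 + A i c * (k : nat)%:R))).
Proof.
move=> rows disc conn; apply: disc.
have [S0_empty|[x0 x0S0]] := set_0Vmem (solset d (zcol A c) b0).
  by move=> x y; rewrite S0_empty inE.
have mxv_upd z i :
    mxv A (coords (upd c z k)) i = mxv (zcol A c) (coords z) i + A i c * (k : nat)%:R.
  rewrite mxv_zcol (@mxv_agree_off A (coords z) _ c) => [|j /negbTE j_c]; last first.
    by rewrite /coords ffunE j_c.
  rewrite /coords ffunE eqxx; ring.
have S_sub : solset d A (\col_i (b0 i 0 + A i c * (k : nat)%:R)) \subset solset d (zcol A c) b0.
  apply/subsetP => z; rewrite !in_solset => /forallP zS; apply/forallP => i.
  case: (rows i) => [pure_row|sign_c].
    have zero_row u : mxv (zcol A c) u i = 0.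
      by apply: big1 => j _; rewrite mxE; case: eqVneq => [_|/pure_row ->]; rewrite mul0r.
    by move: x0S0; rewrite in_solset => /forallP /(_ i); rewrite !zero_row.
  have := zS i; have := sign_c (z c); rewrite mxE mxv_zcol /coords; nra.
have upd_S z : z \in solset d (zcol A c) b0 ->
    upd c z k \in solset d A (\col_i (b0 i 0 + A i c * (k : nat)%:R)).
  rewrite !in_solset => /forallP zS0; apply/forallP => i.
  by rewrite mxE mxv_upd lerD2r.
apply: (connected_retract S_sub upd_S) conn => z zS0.
exact: connect_upd zS0 (subsetP S_sub _ (upd_S z zS0)).
Qed.

Lemma disconnectable_of_zcol A c :
  can_elim A setT c -> disconnectable (zcol A c) -> disconnectable A.
Proof.
case=> _ elim_c [b0 disc]; case: elim_c => pure_rows.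
- exists (\col_i (b0 i 0 + A i c * (@ord0 d : nat)%:R)).
  apply: disconnected_of_zcol disc => i; case: (ltrP 0 (A i c)) => [pos|nonpos].
    by left => j; apply: pure_rows pos j (in_setT j).
  by right => k'; rewrite subr0 mulr_le0_ge0.
- exists (\col_i (b0 i 0 + A i c * (@ord_max d : nat)%:R)).
  apply: disconnected_of_zcol disc => i; case: (ltrP (A i c) 0) => [neg|nonneg].
    by left => j; apply: pure_rows neg j (in_setT j).
  by right => k'; rewrite mulr_ge0_le0 // subr_le0 ler_nat -ltnS.
Qed.

Lemma can_elim_zcol A c (J0 J : {set 'I_n}) j :
  can_elim (zcol A c) J0 j -> J \subset J0 -> j \in J -> c \notin J -> can_elim A J j.
Proof.
move=> [_ elim_j] sub_J jJ cJ; split => //.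
have zcolE i j' : j' \in J -> zcol A c i j' = A i j'.
  by move=> j'J; rewrite mxE; case: eqVneq j'J cJ => // -> ->.
case: elim_j => pure_rows; [left|right] => i sign_i j' j'J j'_j;
  by rewrite -zcolE //; apply: pure_rows; rewrite ?zcolE ?(subsetP sub_J).
Qed.

Lemma has_EO_zcol A c : can_elim A setT c -> has_EO (zcol A c) -> has_EO A.
Proof.
move=> elim_c [s0 [perm_s0 elim_s0]].
have c_s0 : c \in s0 by rewrite (perm_mem perm_s0) mem_enum.
move: perm_s0 elim_s0; case/splitPr: c_s0 => t1 t2 perm_s0 elim_s0.
have perm_s : perm_eq (c :: t1 ++ t2) (enum 'I_n).
  by apply: perm_trans perm_s0; rewrite -cat1s perm_catCA.
exists (c :: t1 ++ t2); split => // -[|c' s1] s2 j /= [<-].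
  by move=> _; rewrite (_ : ~: _ = setT) //; apply/setP => i; rewrite !inE.
move=> eq_t; have j_notin : j \notin c :: s1.
  have := perm_uniq perm_s; rewrite enum_uniq eq_t -cat_cons cat_uniq.
  by case/and3P => _ /hasPn /(_ j (mem_head _ _)).
have elim_prefix (p1 p2 : seq 'I_n) : t1 ++ c :: t2 = p1 ++ j :: p2 -> {subset p1 <= c :: s1} ->
    can_elim A (~: [set x in c :: s1]) j.
  move=> eq_p sub_p; apply: can_elim_zcol (elim_s0 _ _ _ eq_p) _ _ _.
  - by apply/subsetP => x; rewrite !inE; apply: contra => /sub_p.
  - by rewrite in_setC in_set.
  - by rewrite in_setC in_set negbK mem_head.
case: (cat_eq_cat_cons eq_t) => -[u eq_1 eq_2].
  apply: (elim_prefix (t1 ++ c :: u) s2); first by rewrite eq_2 -catA.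
  move=> x; rewrite eq_1 mem_cat !inE mem_cat.
  by case/orP => [->|/orP [->|->]]; rewrite ?orbT.
apply: (elim_prefix s1 (u ++ c :: t2)); first by rewrite eq_1 -catA.
by move=> x x_s1; rewrite inE x_s1 orbT.
Qed.

Lemma has_EO_nzcol0 A : (forall c, ~~ nzcol A c) -> has_EO A.
Proof.
move=> zero_cols; exists (enum 'I_n); split => // s1 s2 j eq_s; split.
  have := enum_uniq 'I_n; rewrite eq_s cat_uniq => /and3P [_ /hasPn /(_ j (mem_head _ _))].
  by rewrite !inE.
left => i; move/existsPn: (zero_cols j) => /(_ i); rewrite negbK => /eqP ->.
by rewrite ltxx.
Qed.

Lemma card_nzcol_zcol A c : nzcol A c ->
  (#|[set j | nzcol (zcol A c) j]| < #|[set j | nzcol A j]|)%N.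
Proof.
move=> nz_c; apply: proper_card; apply/properP; split.
  apply/subsetP => j; rewrite !inE => /existsP [i]; rewrite mxE.
  by case: (eqVneq j c) => [_|_ nz_ij]; [rewrite eqxx | apply/existsP; exists i].
by exists c; rewrite !inE //; apply/existsPn => i; rewrite mxE eqxx negbK.
Qed.

Lemma not_can_elimT A c :
  ~ can_elim A setT c ->
  (exists i, 0 < A i c /\ exists2 j, j != c & A i j != 0) /\
  (exists i, A i c < 0 /\ exists2 j, j != c & A i j != 0).
Proof.
move=> not_elim; split; apply: NNPP => none; apply: not_elim; split; rewrite ?in_setT //.
  left=> i pos j _ j_c; apply/eqP; apply: contraT => nz_ij; case: none.
  by exists i; split => //; exists j.
right=> i neg j _ j_c; apply/eqP; apply: contraT => nz_ij; case: none.
by exists i; split => //; exists j.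
Qed.

Lemma no_EO_disconnectable_of_stuck :
  (forall A, (exists c, nzcol A c) -> (forall c, nzcol A c -> ~ can_elim A setT c) ->
     disconnectable A) ->
  forall A, ~ has_EO A -> disconnectable A.
Proof.
move=> stuck_disc A; move: {2}#|_|.+1 (ltnSn #|[set j | nzcol A j]|) => N.
elim: N A => // N IH A lt_N noEO.
case: (classic (exists2 c, nzcol A c & can_elim A setT c)) => [[c nz_c elim_c]|not_elim].
  apply: (disconnectable_of_zcol elim_c) (IH _ _ _).
    by apply: leq_trans (card_nzcol_zcol nz_c) _; rewrite -ltnS.
  by move/(has_EO_zcol elim_c).
case: (boolP [exists c, nzcol A c]) => [/existsP nz|/existsPn zero_cols].
  by apply: (stuck_disc _ nz) => c nz_c elim_c; apply: not_elim; exists c.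
by case: noEO; apply: has_EO_nzcol0.
Qed.

End Disconnection.

Lemma third_row (p q : 'I_3) : p != q ->
  exists t, [/\ t != p, t != q & forall r, r != p -> r != q -> r = t].
Proof.
move=> p_q; have: #|~: [set p; q]| == 1%N by rewrite cardsCs setCK cards2 p_q card_ord.
case/cards1P => t only_t; have: t \in ~: [set p; q] by rewrite only_t set11.
rewrite !inE negb_or => /andP [t_p t_q]; exists t; split => // r r_p r_q.
by apply/set1P; rewrite -only_t !inE negb_or r_p r_q.
Qed.

Lemma sign_majority (R : realDomainType) (f : 'I_3 -> R) :
  (forall i1 i2, i1 != i2 -> 0 <= f i1 \/ 0 <= f i2) \/
  (forall i1 i2, i1 != i2 -> f i1 <= 0 \/ f i2 <= 0).
Proof.
case: (classic (exists i1 i2, [/\ i1 != i2, f i1 < 0 & f i2 < 0])) => [|none]; last first.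
  left => i1 i2 i1_i2; case: (lerP 0 (f i1)) => [|f1_lt0]; first by left.
  case: (lerP 0 (f i2)) => [|f2_lt0]; first by right.
  by case: none; exists i1, i2.
case=> i1 [i2 [i1_i2 f1_lt0 f2_lt0]]; right => j1 j2 j1_j2.
have [t [_ _ only_t]] := third_row i1_i2.
have f_le0 j : j != t -> f j <= 0.
  move=> j_t; case: (eqVneq j i1) => [->|j_i1]; first exact: ltW.
  case: (eqVneq j i2) => [->|j_i2]; first exact: ltW.
  by rewrite (only_t j j_i1 j_i2) eqxx in j_t.
case: (eqVneq j1 t) => [j1_t|j1_t]; last by left; apply: f_le0.
by right; apply: f_le0; rewrite -j1_t eq_sym.
Qed.

Section ThreeRows.
Variables (R : realType) (d n : nat).
Hypothesis d_gt0 : (0 < d)%N.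
Implicit Types (A : 'M[R]_(3, n)) (w : 'I_n -> R).

Definition split_row A w i c c' := [/\ w c * A i c < 0, 0 < w c' * A i c' &
  forall e, e != c -> e != c' -> w e * A i e = 0].

Lemma mxv_split_row A w i c c' :
  split_row A w i c c' -> mxv A w i = w c * A i c + w c' * A i c'.
Proof.
case=> neg_c pos_c' off; have c'_c : c' != c by apply: contraTneq neg_c => <-; rewrite -leNgt ltW.
rewrite /mxv (bigD1 c) // (bigD1 c') //= big1 => [|e /andP [e_c' e_c]]; last first.
  by rewrite mulrC off.
by rewrite addr0 ![A i _ * _]mulrC.
Qed.

Lemma split_row_blocked A w i c c' : split_row A w i c c' -> blocked A (mxv A w) (w c) c.
Proof.
move=> split_i; have [neg_c pos_c' _] := split_i.
by apply/existsP; exists i; rewrite (mxv_split_row split_i); apply/andP; split; lra.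
Qed.

Lemma split_row_blockedN A w i c c' :
  split_row A w i c c' -> blocked A (mxv A (fun e => - w e)) (- w c') c'.
Proof.
move=> split_i; have [neg_c pos_c' _] := split_i.
by apply/existsP; exists i; rewrite mxvN (mxv_split_row split_i); apply/andP; split; lra.
Qed.

Definition signed_cols A := forall c, nzcol A c -> (exists i, 0 < A i c) /\ (exists i, A i c < 0).

Lemma split_rows_disconnectable A w : signed_cols A ->
  (forall c, Num.sg (w c) = w c) -> (exists c, w c != 0) ->
  (forall c, w c != 0 ->
     (exists i c', split_row A w i c c') /\ (exists i c', split_row A w i c' c)) ->
  disconnectable d A.
Proof.
move=> signed sg_w [c0 wc0] splits.
have blocked_unmoved (v : 'I_3 -> R) : (forall i1 i2, i1 != i2 -> 0 <= v i1 \/ 0 <= v i2) ->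
    forall c, nzcol A c -> blocked A v 1 c || blocked A v (-1) c.
  move=> v_ge0 c /signed [[i1 pos] [i2 neg]].
  have i1_i2 : i1 != i2 by apply: contraTneq pos => ->; rewrite -leNgt ltW.
  case: (v_ge0 _ _ i1_i2); first exact: blocked_of_nonneg (lt0r_neq0 pos).
  exact: blocked_of_nonneg (ltr0_neq0 neg).
case: (sign_majority (mxv A w)) => [nonneg|nonpos].
  apply: (direction_disconnectable d_gt0 sg_w) => [|c /splits [[i [c' split_i]] _]|c nz_c _].
  - by exists c0.
  - exact: split_row_blocked split_i.
  exact: blocked_unmoved.
apply: (direction_disconnectable (w := fun e => - w e) d_gt0) => [c|||c nz_c _].
- by rewrite sgrN sg_w.
- by exists c0; rewrite oppr_eq0.
- move=> c; rewrite oppr_eq0 => /splits [_ [i [c' split_i]]].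
  exact: split_row_blockedN split_i.
by apply: blocked_unmoved nz_c => i1 i2 /nonpos; rewrite !mxvN !oppr_ge0.
Qed.

Lemma crossing_disconnectable A (j k : 'I_n) (i1 i2 : 'I_3) : signed_cols A -> j != k ->
  A i1 j * A i2 j < 0 -> A i1 k * A i2 k < 0 -> disconnectable d A.
Proof.
move=> signed j_k cross_j cross_k.
pose w e := if e == j then - Num.sg (A i1 j) else if e == k then Num.sg (A i1 k) else 0.
have [wj wk] : w j = - Num.sg (A i1 j) /\ w k = Num.sg (A i1 k).
  by rewrite /w eqxx eq_sym (negbTE j_k) eqxx.
have w_off e : e != j -> e != k -> w e = 0 by rewrite /w => /negbTE -> /negbTE ->.
have split1 : split_row A w i1 j k.
  split=> [||e e_j e_k]; last by rewrite w_off ?mul0r.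
  - by rewrite wj mulNr oppr_lt0 sgr_mul_self_gt0 // (mulr_lt0_neq0l cross_j).
  - by rewrite wk sgr_mul_self_gt0 // (mulr_lt0_neq0l cross_k).
have split2 : split_row A w i2 k j.
  split=> [||e e_k e_j]; last by rewrite w_off ?mul0r.
  - by rewrite wk sgr_mul_lt0.
  - by rewrite wj mulNr oppr_gt0 sgr_mul_lt0.
apply: (split_rows_disconnectable (w := w) signed) => [e||e].
- by rewrite /w; do 2?case: ifP => _; rewrite ?sgrN ?sgr_id ?sgr0.
- by exists j; rewrite wj oppr_eq0 sgr_eq0 (mulr_lt0_neq0l cross_j).
move=> w_e; case: (eqVneq e j) => [->|e_j]; first by split; [exists i1, k | exists i2, k].
case: (eqVneq e k) => [->|e_k]; first by split; [exists i2, j | exists i1, j].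
by rewrite w_off ?eqxx in w_e.
Qed.

Lemma triangle_disconnectable A (c0 j k : 'I_n) (p q t : 'I_3) : signed_cols A ->
  j != c0 -> k != c0 -> j != k ->
  A p c0 * A q c0 < 0 -> A t c0 = 0 ->
  A p j * A t j < 0 -> A q j = 0 ->
  A q k * A t k < 0 -> A p k = 0 -> disconnectable d A.
Proof.
move=> signed j_c0 k_c0 j_k cross_c0 Atc0 cross_j Aqj cross_k Apk.
(* The signs make [p], [q] and [t] split rows, each of [c0], [j], [k] being the
   negative end of one and the positive end of another. *)
pose w e := if e == c0 then - Num.sg (A p c0) else if e == j then Num.sg (A p j)
  else if e == k then - Num.sg (A q k) else 0.
have [wc0 wj wk] :
    [/\ w c0 = - Num.sg (A p c0), w j = Num.sg (A p j) & w k = - Num.sg (A q k)].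
  by rewrite /w eqxx (negbTE j_c0) eqxx (negbTE k_c0) eq_sym (negbTE j_k) eqxx.
have w_off e : e != c0 -> e != j -> e != k -> w e = 0.
  by rewrite /w => /negbTE -> /negbTE -> /negbTE ->.
have split_p : split_row A w p c0 j.
  split=> [||e e_c0 e_j].
  - by rewrite wc0 mulNr oppr_lt0 sgr_mul_self_gt0 // (mulr_lt0_neq0l cross_c0).
  - by rewrite wj sgr_mul_self_gt0 // (mulr_lt0_neq0l cross_j).
  by case: (eqVneq e k) => [->|e_k]; rewrite ?Apk ?mulr0 // w_off ?mul0r.
have split_q : split_row A w q k c0.
  split=> [||e e_k e_c0].
  - by rewrite wk mulNr oppr_lt0 sgr_mul_self_gt0 // (mulr_lt0_neq0l cross_k).
  - by rewrite wc0 mulNr oppr_gt0 sgr_mul_lt0.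
  by case: (eqVneq e j) => [->|e_j]; rewrite ?Aqj ?mulr0 // w_off ?mul0r.
have split_t : split_row A w t j k.
  split=> [||e e_j e_k].
  - by rewrite wj sgr_mul_lt0.
  - by rewrite wk mulNr oppr_gt0 sgr_mul_lt0.
  by case: (eqVneq e c0) => [->|e_c0]; rewrite ?Atc0 ?mulr0 // w_off ?mul0r.
apply: (split_rows_disconnectable (w := w) signed) => [e||e w_e].
- by rewrite /w; do 3?case: ifP => _; rewrite ?sgrN ?sgr_id ?sgr0.
- by exists c0; rewrite wc0 oppr_eq0 sgr_eq0 (mulr_lt0_neq0l cross_c0).
case: (eqVneq e c0) => [->|e_c0]; first by split; [exists p, j | exists q, k].
case: (eqVneq e j) => [->|e_j]; first by split; [exists t, k | exists p, c0].
case: (eqVneq e k) => [->|e_k]; first by split; [exists q, c0 | exists t, j].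
by rewrite w_off ?eqxx in w_e.
Qed.

Lemma column_support A (c : 'I_n) (r a b : 'I_3) : a != b -> r != a -> r != b ->
  A r c = 0 -> forall i, A i c != 0 -> i = a \/ i = b.
Proof.
move=> a_b r_a r_b Arc i nz_i; have [t [_ _ only_t]] := third_row a_b.
case: (eqVneq i a) => [|i_a]; first by left.
case: (eqVneq i b) => [|i_b]; first by right.
by move: nz_i; rewrite (only_t i i_a i_b) -(only_t r r_a r_b) Arc eqxx.
Qed.

Section NoCrossing.
Variable A : 'M[R]_(3, n).
Hypothesis stuck : forall c, nzcol A c -> ~ can_elim A setT c.
Hypothesis no_cross : forall (j k : 'I_n) (i1 i2 : 'I_3), j != k ->
  A i1 j * A i2 j < 0 -> A i1 k * A i2 k < 0 -> False.

Lemma stuck_signed_cols : signed_cols A.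
Proof.
move=> c /stuck /not_can_elimT [[i [pos _]] [i' [neg _]]].
by split; [exists i | exists i'].
Qed.

Lemma lone_sign_row (c j : 'I_n) (p : 'I_3) : j != c -> A p j != 0 ->
  ~ (forall r, r != p -> A p c * A r c < 0).
Proof.
move=> j_c nz_pj lone.
have nz_j : nzcol A j by apply/existsP; exists p.
have [pos neg] := stuck_signed_cols nz_j.
have [r cross_j] := exists_mul_lt0 nz_pj pos neg.
have r_p : r != p by apply: contraTneq cross_j => ->; rewrite mulr_lt0 addbb !andbF.
have c_j : c != j by rewrite eq_sym.
exact: (no_cross c_j (lone r r_p) cross_j).
Qed.

(* A column with three nonzero entries has a row whose sign is unique in it, and
   the other column met in that row crosses it. *)
Lemma stuck_zero_entry c : nzcol A c -> exists r, A r c = 0.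
Proof.
move=> nz_c; apply: NNPP => all_nz.
have [[p [pos [j j_c nz_pj]]] [q [neg [k k_c nz_qk]]]] := not_can_elimT (stuck nz_c).
have p_q : p != q by apply: contraTneq pos => ->; rewrite -leNgt ltW.
have [t [t_p t_q only_t]] := third_row p_q.
have nz_t : A t c != 0 by apply/eqP => Atc; apply: all_nz; exists t.
case: (ltrgtP (A t c) 0) => [t_neg|t_pos|Atc]; last by rewrite Atc eqxx in nz_t.
- apply: (lone_sign_row j_c nz_pj) => r r_p.
  by case: (eqVneq r q) => [->|r_q]; last rewrite (only_t r r_p r_q); nra.
- apply: (lone_sign_row k_c nz_qk) => r r_q.
  by case: (eqVneq r p) => [->|r_p]; last rewrite (only_t r r_p r_q); nra.
Qed.

Lemma no_cross_zero (c j : 'I_n) (p q : 'I_3) : p != q -> A p c * A q c < 0 ->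
  j != c -> A p j != 0 -> A q j = 0.
Proof.
move=> p_q cross_c j_c nz_pj; apply/eqP/negPn/negP => nz_qj.
have nz_j : nzcol A j by apply/existsP; exists p.
have [r Arj] := stuck_zero_entry nz_j.
have r_p : r != p by apply: contraNneq nz_pj => <-; rewrite Arj.
have r_q : r != q by apply: contraNneq nz_qj => <-; rewrite Arj.
have [pos neg] := stuck_signed_cols nz_j.
have := mul_lt0_of_support (column_support p_q r_p r_q Arj) pos neg.
by apply: no_cross cross_c; rewrite eq_sym.
Qed.

(* Every nonzero column now has exactly two nonzero entries, of opposite signs;
   the columns met by [c0] in its positive and negative rows close a triangle. *)
Lemma no_cross_disconnectable : (exists c, nzcol A c) -> disconnectable d A.
Proof.
case=> c0 nz_c0.
have [[p [pos [j j_c0 nz_pj]]] [q [neg [k k_c0 nz_qk]]]] := not_can_elimT (stuck nz_c0).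
have p_q : p != q by apply: contraTneq pos => ->; rewrite -leNgt ltW.
have [t [t_p t_q only_t]] := third_row p_q.
have [p_t q_t q_p] : [/\ p != t, q != t & q != p] by split; rewrite eq_sym.
have cross_c0 : A p c0 * A q c0 < 0 by nra.
have Aqj : A q j = 0 by apply: no_cross_zero cross_c0 j_c0 nz_pj.
have Apk : A p k = 0 by apply: (no_cross_zero q_p _ k_c0 nz_qk); rewrite mulrC.
have Atc0 : A t c0 = 0.
  have [r Arc0] := stuck_zero_entry nz_c0.
  rewrite -(only_t r) //; [apply: contraTneq pos | apply: contraTneq neg];
    by move=> <-; rewrite Arc0 ltxx.
have support_pt := column_support p_t q_p q_t Aqj.
have support_qt := column_support q_t p_q p_t Apk.
have nz_j : nzcol A j by apply/existsP; exists p.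
have nz_k : nzcol A k by apply/existsP; exists q.
have [posj negj] := stuck_signed_cols nz_j.
have [posk negk] := stuck_signed_cols nz_k.
have j_k : j != k by apply: contraNneq nz_qk => <-; rewrite Aqj.
apply: (triangle_disconnectable stuck_signed_cols j_c0 k_c0 j_k cross_c0 Atc0 _ Aqj _ Apk).
  exact: mul_lt0_of_support support_pt posj negj.
exact: mul_lt0_of_support support_qt posk negk.
Qed.

End NoCrossing.

Lemma stuck_disconnectable A : (exists c, nzcol A c) ->
  (forall c, nzcol A c -> ~ can_elim A setT c) -> disconnectable d A.
Proof.
move=> nz stuck.
case: (classic (exists j k i1 i2, [/\ j != k, A i1 j * A i2 j < 0 & A i1 k * A i2 k < 0])).
  case=> j [k [i1 [i2 [j_k cross_j cross_k]]]].
  exact: crossing_disconnectable (stuck_signed_cols stuck) j_k cross_j cross_k.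
move=> none; apply: no_cross_disconnectable stuck _ nz => j k i1 i2 j_k cross_j cross_k.
by apply: none; exists j, k, i1, i2.
Qed.

End ThreeRows.

Theorem lemma7 (R : realType) (d n : nat) (hd : (0 < d)%N) (A : 'M[R]_(3, n)) :
  ~ has_EO A -> exists b : 'cV[R]_3, ~ graph_connected (solset d A b).
Proof. exact: (no_EO_disconnectable_of_stuck (stuck_disconnectable hd)). Qed.
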